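(* For an $R$-module $M$ the following are equivalent: (i) $M$ is simple-$\mathcal F$-torsion-free; (ii) $M$ is prime, uniform, and $\mathrm{Ann}_R(M)\in\mathcal F^*$; (iii) there exist $\mathfrak p\in\mathcal F^*$ and a monomorphism $M\hookrightarrow\kappa(\mathfrak p)=R_{\mathfrak p}/\mathfrak pR_{\mathfrak p}$ with $M\neq 0$.
   Context: Throughout, $R$ is a commutative Noetherian local ring and $\mathcal F$ is a Gabriel topology on $R$: a nonempty set of ideals of $R$ such that (1) if $\mathfrak a\in\mathcal F$ and $\mathfrak a\subseteq\mathfrak b$ then $\mathfrak b\in\mathcal F$; (2) if $\mathfrak a,\mathfrak b\in\mathcal F$ then $\mathfrak a\cap\mathfrak b\in\mathcal F$; (3) if $\mathfrak b$ is an ideal and there is $\mathfrak a\in\mathcal F$ with $(\mathfrak b:r)\in\mathcal F$ for all $r\in\mathfrak a$, then $\mathfrak b\in\mathcal F$. For an $R$-module $X$ and ideal $\mathfrak a$, $X[\mathfrak a]=\{x\in X:\mathfrak a x=0\}$. $X$ is $\mathcal F$-torsion-free if $X[\mathfrak a]=0$ for all $\mathfrak a\in\mathcal F$. $M$ is simple-$\mathcal F$-torsion-free if $M\neq0$, $M$ is $\mathcal F$-torsion-free, and for every submodule $0\neq U\subsetneq M$, $M/U$ is not $\mathcal F$-torsion-free. $\mathcal F^*$ denotes the set of maximal elements (under inclusion) of $\mathrm{Spec}(R)\setminus\mathcal F$. A module $M\neq0$ is prime if every $r\in R$ acts on $M$ either as zero or injectively. A module is uniform if it is nonzero and any two nonzero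 submodules intersect nontrivially. *)

From HB Require Import structures.
From mathcomp Require Import all_boot all_order all_algebra.
Set Implicit Arguments. Unset Strict Implicit. Unset Printing Implicit Defensive.
Import GRing.Theory.
Local Open Scope ring_scope.

Section Defs.
Variable R : comUnitRingType.

Definition subset_p {T} (A B : T -> Prop) := forall x, A x -> B x.

Definition is_ideal (I : R -> Prop) : Prop :=
  [/\ I 0, (forall x y, I x -> I y -> I (x + y)) & (forall r x, I x -> I (r * x))].

Definition is_prime_ideal (P : R -> Prop) : Prop :=
  [/\ is_ideal P, ~ P 1 & (forall a b, P (a * b) -> P a \/ P b)].

Definition is_maximal_ideal (m : R -> Prop) : Prop :=
  [/\ is_ideal m, ~ m 1 &
     (forall J, is_ideal J -> subset_p m J -> ~ J 1 -> subset_p J m)].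

Definition noetherian : Prop :=
  forall I : nat -> R -> Prop, (forall n, is_ideal (I n)) ->
    (forall n, subset_p (I n) (I n.+1)) ->
    exists N, forall n, (N <= n)%N -> subset_p (I n) (I N).

Definition local_ring : Prop :=
  exists m, is_maximal_ideal m /\
    forall m', is_maximal_ideal m' -> forall x, m' x <-> m x.

Definition colon (b : R -> Prop) (r : R) : R -> Prop := fun x => b (x * r).

Definition gabriel_topology (F : (R -> Prop) -> Prop) : Prop :=
  [/\ (forall a, F a -> is_ideal a),
      (exists a, F a),
      (forall a b, F a -> is_ideal b -> subset_p a b -> F b),
      (forall a b, F a -> F b -> F (fun x => a x /\ b x)) &
      (forall b, is_ideal b ->
         (exists a, F a /\ forall r, a r -> F (colon b r)) -> F b)].

Definition Fstar (F : (R -> Prop) -> Prop) (p : R -> Prop) : Prop :=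
  [/\ is_prime_ideal p, ~ F p &
      (forall q, is_prime_ideal q -> ~ F q -> subset_p p q -> subset_p q p)].

Variable M : lmodType R.

Definition nonzero_mod : Prop := exists x : M, x <> 0.

Definition is_submodule (U : M -> Prop) : Prop :=
  [/\ U 0, (forall x y, U x -> U y -> U (x + y)) & (forall r x, U x -> U (r *: x))].

Definition ann_in (a : R -> Prop) (x : M) : Prop := forall r, a r -> r *: x = 0.

Definition F_torsion_free (F : (R -> Prop) -> Prop) : Prop :=
  forall a, F a -> forall x : M, ann_in a x -> x = 0.

(* M/U is F-torsion-free, unfolded: (M/U)[a] = 0 for all a in F,
   i.e. every x with a x ⊆ U lies in U. *)
Definition quot_F_torsion_free (F : (R -> Prop) -> Prop) (U : M -> Prop) : Prop :=
  forall a, F a -> forall x : M, (forall r, a r -> U (r *: x)) -> U x.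

Definition simple_F_torsion_free (F : (R -> Prop) -> Prop) : Prop :=
  [/\ nonzero_mod, F_torsion_free F &
      (forall U, is_submodule U -> (exists x, U x /\ x <> 0) ->
         (exists x, ~ U x) -> ~ quot_F_torsion_free F U)].

Definition prime_module : Prop :=
  nonzero_mod /\
  forall r : R, (forall x : M, r *: x = 0) \/ injective (fun x : M => r *: x).

Definition uniform_module : Prop :=
  nonzero_mod /\
  forall U V, is_submodule U -> is_submodule V ->
    (exists x, U x /\ x <> 0) -> (exists x, V x /\ x <> 0) ->
    exists x, [/\ U x, V x & x <> 0].

Definition Ann : R -> Prop := fun r => forall x : M, r *: x = 0.

(* kappa(p) = R_p / p R_p, presented as pairs (a, s) with s ∉ p
   ("a/s"), where a/s = b/t iff a t - b s ∈ p. *)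
Definition kappa_eq (p : R -> Prop) (u v : R * R) : Prop := p (u.1 * v.2 - v.1 * u.2).
Definition kappa_add (u v : R * R) : R * R := (u.1 * v.2 + v.1 * u.2, u.2 * v.2).
Definition kappa_scale (r : R) (u : R * R) : R * R := (r * u.1, u.2).

(* f : M -> kappa(p) is an injective R-linear map (on representatives) *)
Definition kappa_mono (p : R -> Prop) (f : M -> R * R) : Prop :=
  [/\ (forall x, ~ p (f x).2),
      (forall x y, kappa_eq p (f (x + y)) (kappa_add (f x) (f y))),
      (forall r x, kappa_eq p (f (r *: x)) (kappa_scale r (f x))) &
      (forall x y, kappa_eq p (f x) (f y) -> x = y)].

End Defs.

(* The ring-theoretic input is [Fstar_above]: an ideal that strictly contains
   a prime of F* lies in F.  It follows from the Noetherian maximum principle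
   together with [maximal_nonF_prime] (ideals maximal outside F are prime).
   (i) => (ii): every nonzero submodule U of a simple-F-torsion-free module is
   "F-dense" ([dense_submodule]); this gives primeness, uniformity and the
   maximality of Ann M.  (ii) => (i) uses uniformity and [Fstar_above].
   (ii) => (iii): fixing x0 <> 0, every y is a "fraction" (a/s) x0 with
   s outside Ann M ([frac_rep_exists]), and y |-> a/s embeds M into
   kappa(Ann M).  (iii) => (ii): transporting along the embedding, r in p
   kills M and r outside p acts injectively, so Ann M = p; uniformity follows
   since any two nonzero elements of kappa(p) have a common nonzero multiple. *)
From HB Require Import structures.
From mathcomp Require Import all_boot all_order all_algebra.
From mathcomp Require Import ring.
From Stdlib Require Import Classical ClassicalEpsilon FunctionalExtensionality PropExtensionality.
Set Implicit Arguments. Unset Strict Implicit. Unset Printing Implicit Defensive.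
Import GRing.Theory.
Local Open Scope ring_scope.

Section Ideals.
Variable R : comUnitRingType.
Implicit Types (I J : R -> Prop) (F : (R -> Prop) -> Prop).

Lemma ideal0 I : is_ideal I -> I 0. Proof. by case. Qed.

Lemma idealD I : is_ideal I -> forall x y, I x -> I y -> I (x + y).
Proof. by case. Qed.

Lemma idealM I : is_ideal I -> forall r x, I x -> I (r * x).
Proof. by case. Qed.

Lemma idealMr I : is_ideal I -> forall r x, I x -> I (x * r).
Proof. by move=> hI r x hx; rewrite mulrC; apply: idealM. Qed.

Lemma idealN I : is_ideal I -> forall x, I x -> I (- x).
Proof. by move=> hI x hx; rewrite -mulN1r; apply: idealM. Qed.

Lemma colon_ideal I r : is_ideal I -> is_ideal (colon I r).
Proof.
move=> hI; split; rewrite /colon.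
- by rewrite mul0r; apply: ideal0.
- by move=> u v hu hv; rewrite mulrDl; apply: idealD.
- by move=> s u hu; rewrite -mulrA; apply: idealM.
Qed.

Definition add_principal I (x : R) : R -> Prop :=
  fun z => exists w t, I w /\ z = w + t * x.

Lemma add_principal_ideal I x : is_ideal I -> is_ideal (add_principal I x).
Proof.
move=> hI; split.
- by exists 0, 0; split; [apply: ideal0 | rewrite mul0r addr0].
- move=> _ _ [w [t [Iw ->]]] [w' [t' [Iw' ->]]]; exists (w + w'), (t + t').
  by split; [apply: idealD | ring].
- move=> r _ [w [t [Iw ->]]]; exists (r * w), (r * t).
  by split; [apply: idealM | ring].
Qed.

(* Noetherian maximum principle: a nonempty family of ideals has a maximal
   member (otherwise dependent choice yields a strictly ascending chain). *)
Lemma noetherian_maximal (S : (R -> Prop) -> Prop) :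
  noetherian R -> (forall J, S J -> is_ideal J) -> forall b, S b ->
  exists q, S q /\ forall J, S J -> subset_p q J -> subset_p J q.
Proof.
move=> noe Sid b Sb; apply: NNPP => nomax.
have grow (q : {q | S q}) : exists J : {J | S J},
    subset_p (sval q) (sval J) /\ ~ subset_p (sval J) (sval q).
  case: q => q Sq /=; apply: NNPP => h; apply: nomax; exists q; split=> // J SJ qJ.
  by apply: NNPP => nJq; apply: h; exists (exist _ J SJ).
pose next q := proj1_sig (constructive_indefinite_description _ (grow q)).
have nextP q := proj2_sig (constructive_indefinite_description _ (grow q)).
pose fix chain (n : nat) : {q | S q} :=
  if n is n'.+1 then next (chain n') else exist _ b Sb.
have [N hN] := noe (fun n => sval (chain n)) (fun n => Sid _ (proj2_sig (chain n)))
  (fun n => (nextP (chain n)).1).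
exact: (nextP (chain N)).2 (hN N.+1 (leqnSn N)).
Qed.

Section Gabriel.
Variables (F : (R -> Prop) -> Prop) (gF : gabriel_topology F).

Lemma gabriel_up I J : F I -> is_ideal J -> subset_p I J -> F J.
Proof. by case: gF => _ _ Fup _ _; apply: Fup. Qed.

Lemma gabriel_cap I J : F I -> F J -> F (fun x => I x /\ J x).
Proof. by case: gF => _ _ _ Fcap _; apply: Fcap. Qed.

Lemma gabriel_colon J I : is_ideal J -> F I -> (forall r, I r -> F (colon J r)) -> F J.
Proof. by case: gF => _ _ _ _ F3 Ji FI h; apply: F3 => //; exists I. Qed.

Lemma gabriel_unit I : is_ideal I -> I 1 -> F I.
Proof.
case: (gF) => _ [a Fa] _ _ _ hI I1; apply: (gabriel_up Fa) => // x _.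
by rewrite -(mulr1 x); apply: idealM.
Qed.

(* An ideal maximal among the ideals outside F is prime: if x y in q with
   x, y outside q then q + R x and (q : x) lie in F, and (q : w + t x)
   contains (q : x) for w in q, so q itself is in F by axiom (3). *)
Lemma maximal_nonF_prime q :
  is_ideal q -> ~ F q ->
  (forall J, is_ideal J -> ~ F J -> subset_p q J -> subset_p J q) ->
  is_prime_ideal q.
Proof.
move=> qi nFq qmax; split=> //; first by move=> q1; apply: nFq; apply: gabriel_unit.
move=> x y qxy; apply: NNPP => /not_or_and [nx ny].
have FJ : F (add_principal q x).
  apply: NNPP => nFJ; apply: nx; apply: (qmax _ (add_principal_ideal x qi)) => //.
  - by move=> w qw; exists w, 0; rewrite mul0r addr0.
  - by exists 0, 1; rewrite mul1r add0r; split=> //; apply: ideal0.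
have Fc : F (colon q x).
  apply: NNPP => nFc; apply: ny; apply: (qmax _ (colon_ideal x qi)) => //.
  - by move=> z qz; rewrite /colon; apply: idealMr.
  - by rewrite /colon mulrC.
apply: nFq; apply: (gabriel_colon qi FJ) => _ [w [t [qw ->]]].
apply: (gabriel_up Fc); first exact: colon_ideal.
move=> z; rewrite /colon => qzx.
have -> : z * (w + t * x) = z * w + t * (z * x) by ring.
by apply: idealD => //; apply: idealM.
Qed.

Lemma Fstar_above p b s :
  noetherian R -> Fstar F p -> is_ideal b -> subset_p p b -> b s -> ~ p s -> F b.
Proof.
move=> noe [pprime _ pmax] bi pb bs ps; apply: NNPP => nFb.
have [q [[qi nFq bq] qmax]] := @noetherian_maximal
  (fun J => [/\ is_ideal J, ~ F J & subset_p b J]) noe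
  (fun J => fun '(And3 h _ _) => h) b (And3 bi nFb (fun x h => h)).
have qprime : is_prime_ideal q.
  apply: maximal_nonF_prime => // J Ji nFJ qJ.
  by apply: qmax => //; split=> // x /bq /qJ.
by apply: ps; apply: (pmax q qprime nFq); [move=> x /pb /bq | apply: bq].
Qed.

End Gabriel.

Lemma kappa_eq_sym (p : R -> Prop) (u v : R * R) : is_ideal p -> kappa_eq p u v -> kappa_eq p v u.
Proof. by rewrite /kappa_eq => pi /(idealN pi); rewrite opprB. Qed.

Lemma kappa_eq_trans (p : R -> Prop) (u v w : R * R) : is_prime_ideal p -> ~ p v.2 ->
  kappa_eq p u v -> kappa_eq p v w -> kappa_eq p u w.
Proof.
case: u v w => [a s] [b t] [c r] [pi _ pp] /= ht; rewrite /kappa_eq /= => h1 h2.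
have : p (t * (a * r - c * s)).
  have -> : t * (a * r - c * s) = r * (a * t - b * s) + s * (b * r - c * t) by ring.
  by apply: (idealD pi); apply: (idealM pi).
by case/pp.
Qed.

End Ideals.

Section Modules.
Variables (R : comUnitRingType) (M : lmodType R).
Implicit Types (x y z : M) (U V : M -> Prop) (F : (R -> Prop) -> Prop).

Lemma scaleC (a b : R) x : a *: (b *: x) = b *: (a *: x).
Proof. by rewrite !scalerA mulrC. Qed.

Lemma Ann_ideal : is_ideal (Ann M).
Proof.
split.
- by move=> x; apply: scale0r.
- by move=> a b ha hb x; rewrite scalerDl ha hb addr0.
- by move=> r a ha x; rewrite -scalerA ha scaler0.
Qed.

Definition span1 x : M -> Prop := fun z => exists s, z = s *: x.

Lemma span1_submodule x : is_submodule (span1 x).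
Proof.
split.
- by exists 0; rewrite scale0r.
- by move=> _ _ [s ->] [t ->]; exists (s + t); rewrite scalerDl.
- by move=> r _ [s ->]; exists (r * s); rewrite scalerA.
Qed.

Lemma span1_self x : span1 x x.
Proof. by exists 1; rewrite scale1r. Qed.

Definition conductor U x : R -> Prop := fun t => U (t *: x).

Lemma conductor_ideal U x : is_submodule U -> is_ideal (conductor U x).
Proof.
case=> U0 UD UZ; split; rewrite /conductor.
- by rewrite scale0r.
- by move=> s t hs ht; rewrite scalerDl; apply: UD.
- by move=> r s hs; rewrite -scalerA; apply: UZ.
Qed.

Lemma prime_module_Ann r x : prime_module M -> x <> 0 -> r *: x = 0 -> Ann M r.
Proof.
move=> [_ pm] nx rx; case: (pm r) => // inj; exfalso; apply: nx.
by apply: inj; rewrite /= rx scaler0.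
Qed.

Lemma prime_module_inj r : prime_module M -> ~ Ann M r -> injective (fun x => r *: x).
Proof. by move=> [_ pm] nAr; case: (pm r). Qed.

Lemma prime_module_Ann_prime : prime_module M -> is_prime_ideal (Ann M).
Proof.
move=> pm; split; first exact: Ann_ideal.
- by case: pm => [[x nx] _] A1; apply: nx; rewrite -(scale1r x) A1.
- move=> a b Aab; case: (classic (Ann M b)) => [|nAb]; [by right | left] => x.
  apply: (prime_module_inj pm nAb) => /=.
  by rewrite scaler0 scalerA mulrC; apply: Aab.
Qed.

Lemma prime_F_torsion_free F :
  gabriel_topology F -> prime_module M -> ~ F (Ann M) -> F_torsion_free M F.
Proof.
move=> gF pm nFA a Fa x ax; apply: NNPP => nx; apply: nFA.
apply: (gabriel_up gF Fa Ann_ideal) => r ar.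
exact: prime_module_Ann nx (ax r ar).
Qed.

Lemma uniform_meet_span1 U x : uniform_module M -> is_submodule U ->
  (exists u, U u /\ u <> 0) -> x <> 0 ->
  exists s, U (s *: x) /\ s *: x <> 0.
Proof.
move=> [_ um] hU hUn nx.
have [z [Uz [s esx] nz]] := um U _ hU (span1_submodule x) hUn
  (ex_intro _ x (conj (span1_self x) nx)).
by exists s; rewrite -esx.
Qed.

Section SimpleTorsionFree.
Variables (F : (R -> Prop) -> Prop) (gF : gabriel_topology F).
Hypothesis sFtf : simple_F_torsion_free M F.

Let tf : F_torsion_free M F. Proof. by case: sFtf. Qed.
Let nz : nonzero_mod M. Proof. by case: sFtf. Qed.

(* Every nonzero submodule U is F-dense: each x has a conductor (U : x) in F.
   Indeed the elements with conductor in F form a submodule C containing U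
   with M / C F-torsion-free, so C = M by simplicity. *)
Lemma dense_submodule U x : is_submodule U -> (exists u, U u /\ u <> 0) ->
  F (conductor U x).
Proof.
move=> hU hUn; case: (hU) => U0 UD UZ.
pose C y := F (conductor U y).
suff Cfull : forall y, C y by apply: Cfull.
case: sFtf => _ _ simple; apply: NNPP => /not_all_ex_not notfull.
apply: (simple C) => //.
- split; rewrite /C.
  + by apply: gabriel_unit => //; [exact: conductor_ideal | rewrite /conductor scale1r].
  + move=> y z Fy Fz; apply: (gabriel_up gF (gabriel_cap gF Fy Fz)).
      exact: conductor_ideal.
    by move=> r [ry rz]; rewrite /conductor scalerDr; apply: UD.
  + move=> s y Fy; apply: (gabriel_up gF Fy); first exact: conductor_ideal.
    by move=> r; rewrite /conductor scaleC; apply: UZ.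
- case: hUn => u [Uu nu]; exists u; split=> //.
  apply: gabriel_unit => //; [exact: conductor_ideal | by rewrite /conductor scale1r].
- move=> a Fa y hy; apply: (gabriel_colon gF (conductor_ideal y hU) Fa) => r ar.
  apply: (gabriel_up gF (hy r ar)); first by apply: colon_ideal; apply: conductor_ideal.
  by move=> t; rewrite /colon /conductor -scalerA.
Qed.

(* The annihilator { x | r x = 0 } of r is a submodule with F-torsion-free
   quotient (M is F-torsion-free), hence it is 0 or M. *)
Lemma sFtf_prime : prime_module M.
Proof.
split=> // r; case: (classic (forall x, r *: x = 0)) => [|/not_all_ex_not [x0 rx0]];
  [by left | right].
move=> x y /= rxy; apply/eqP; rewrite -subr_eq0; apply/eqP; apply: NNPP => nxy.
case: sFtf => _ _ simple; apply: (simple (fun z => r *: z = 0)).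
- split.
  + exact: scaler0.
  + by move=> a b ha hb; rewrite scalerDr ha hb addr0.
  + by move=> s a ha; rewrite scaleC ha scaler0.
- by exists (x - y); rewrite scalerBr rxy subrr.
- by exists x0.
- by move=> a Fa z hz; apply: (tf Fa) => s sa; rewrite scaleC; apply: hz.
Qed.

(* If U, V are nonzero and v in V is nonzero, some r in the F-ideal (U : v)
   has r v <> 0 by torsion-freeness; then r v lies in U and V. *)
Lemma sFtf_uniform : uniform_module M.
Proof.
split=> // U V hU hV hUn [v [Vv nv]]; apply: NNPP => nomeet.
apply: nv; apply: (tf (dense_submodule v hU hUn)) => r ar.
apply: NNPP => nrv; apply: nomeet; exists (r *: v); split=> //.
by case: hV => _ _; apply.
Qed.

(* Ann M is outside F by torsion-freeness; if a prime q outside F contained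
   r outside Ann M, the F-dense submodule R r x would force q into F. *)
Lemma sFtf_Ann_Fstar : Fstar F (Ann M).
Proof.
have pm := sFtf_prime; split; first exact: prime_module_Ann_prime.
  by move=> FA; case: nz => x; apply; apply: (tf FA).
move=> q [qi _ _] nFq Aq r qr; apply: NNPP => nAr; case: nz => x nx.
have hUn : exists u, span1 (r *: x) u /\ u <> 0.
  exists (r *: x); split; first exact: span1_self.
  by move=> rx0; apply: nx; apply: (prime_module_inj pm nAr); rewrite /= rx0 scaler0.
apply: nFq; apply: (gabriel_up gF (dense_submodule x (span1_submodule _) hUn)) => // t [s hs].
have Ats : Ann M (t - s * r).
  by apply: (prime_module_Ann pm nx); rewrite scalerBl hs scalerA subrr.
by rewrite -(subrK (s * r) t); apply: (idealD qi); [apply: Aq | apply: idealM].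
Qed.

End SimpleTorsionFree.

(* (ii) => (i): for a nonzero submodule U and x outside U, uniformity gives
   s x in U, nonzero, so s is outside Ann M and (U : x) strictly contains
   Ann M; hence (U : x) is in F and x lies in U if M / U is F-torsion-free. *)
Lemma prime_uniform_sFtf F :
  gabriel_topology F -> noetherian R ->
  [/\ prime_module M, uniform_module M & Fstar F (Ann M)] -> simple_F_torsion_free M F.
Proof.
move=> gF noe [pm um hA]; have [_ nFA _] := hA.
split; [by case: pm | exact: prime_F_torsion_free |].
move=> U hU hUn [x nUx] qtf.
have nx : x <> 0 by move=> x0; apply: nUx; rewrite x0; case: hU.
have [s [Usx nsx]] := uniform_meet_span1 um hU hUn nx.
apply: nUx; apply: (qtf (conductor U x)) => //; apply: (Fstar_above gF noe hA (conductor_ideal x hU) _ Usx).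
- by move=> t At; rewrite /conductor (At x); case: hU.
- by move=> As; apply: nsx; rewrite As.
Qed.

Section KappaEmbedding.
Hypotheses (pm : prime_module M) (um : uniform_module M).
Variable x0 : M.
Hypothesis nx0 : x0 <> 0.

(* u = (a, s) represents y as the fraction (a / s) x0: a x0 = s y with s
   outside Ann M. *)
Definition frac_rep y (u : R * R) : Prop := ~ Ann M u.2 /\ u.1 *: x0 = u.2 *: y.

Let Ann_mul u v : ~ Ann M u -> ~ Ann M v -> ~ Ann M (u * v).
Proof. by have [_ _ Ap] := prime_module_Ann_prime pm; move=> nu nv /Ap []. Qed.

Let frac_mul a s y t : a *: x0 = s *: y -> (a * t) *: x0 = (s * t) *: y.
Proof. by move=> e; rewrite -!scalerA scaleC e scaleC. Qed.

Lemma frac_rep_exists y : exists u, frac_rep y u.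
Proof.
case: (classic (y = 0)) => [->|ny].
  by exists (0, 1); split=> /=; [move/(_ x0); rewrite scale1r | rewrite scale0r scaler0].
have [b [[a ea] nby]] := uniform_meet_span1 um (span1_submodule x0)
  (ex_intro _ x0 (conj (span1_self x0) nx0)) ny.
by exists (a, b); split=> /=; [move=> Ab; apply: nby; rewrite Ab | rewrite -ea].
Qed.

Lemma frac_rep_eq y y' u v : frac_rep y u -> frac_rep y' v ->
  (kappa_eq (Ann M) u v <-> y = y').
Proof.
case: u v => [a s] [b t] [/= ns ea] [/= nt eb]; rewrite /kappa_eq /=.
have E : (a * t - b * s) *: x0 = (s * t) *: (y - y').
  by rewrite scalerBl (frac_mul t ea) (frac_mul s eb) scalerBr [t * s]mulrC.
split=> [Aat|yy]; last by apply: (prime_module_Ann pm nx0); rewrite E yy subrr scaler0.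
apply/eqP; rewrite -subr_eq0; apply/eqP.
by apply: (prime_module_inj pm (Ann_mul ns nt)); rewrite /= -E (Aat x0) scaler0.
Qed.

Lemma frac_rep_add y z u v : frac_rep y u -> frac_rep z v -> frac_rep (y + z) (kappa_add u v).
Proof.
case: u v => [a s] [b t] [/= ns ea] [/= nt eb]; split=> /=; first exact: Ann_mul.
by rewrite scalerDl scalerDr (frac_mul t ea) (frac_mul s eb) [t * s]mulrC.
Qed.

Lemma frac_rep_scale r y u : frac_rep y u -> frac_rep (r *: y) (kappa_scale r u).
Proof. by case: u => [a s] [/= ns ea]; split=> //=; rewrite -scalerA ea scaleC. Qed.

Lemma kappa_embedding : exists f : M -> R * R, kappa_mono (Ann M) f.
Proof.
pose f y := proj1_sig (constructive_indefinite_description _ (frac_rep_exists y)).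
have fP y : frac_rep y (f y) :=
  proj2_sig (constructive_indefinite_description _ (frac_rep_exists y)).
exists f; split.
- by move=> y; case: (fP y).
- by move=> y z; apply/(frac_rep_eq (fP _) (frac_rep_add (fP y) (fP z))).
- by move=> r y; apply/(frac_rep_eq (fP _) (frac_rep_scale r (fP y))).
- by move=> y z /(frac_rep_eq (fP y) (fP z)).
Qed.

End KappaEmbedding.

Section FromKappa.
Variables (p : R -> Prop) (f : M -> R * R).
Hypotheses (pprime : is_prime_ideal p) (fmono : kappa_mono p f).

Let pi : is_ideal p. Proof. by case: pprime. Qed.
Let pp a b : p (a * b) -> p a \/ p b. Proof. by case: pprime => _ _; apply. Qed.
Let fden x : ~ p (f x).2. Proof. by case: fmono. Qed.
Let fadd x y : kappa_eq p (f (x + y)) (kappa_add (f x) (f y)). Proof. by case: fmono. Qed.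
Let fscale r x : kappa_eq p (f (r *: x)) (kappa_scale r (f x)). Proof. by case: fmono. Qed.
Let finj x y : kappa_eq p (f x) (f y) -> x = y. Proof. by case: fmono => _ _ _; apply. Qed.
Arguments fden x : clear implicits.
Arguments fadd x y : clear implicits.
Arguments fscale r x : clear implicits.

(* f 0 = 0 in kappa(p), because f 0 = f 0 + f 0. *)
Lemma kappa_mono_zero : p (f 0).1.
Proof.
move: (fden 0) (fadd 0 0); rewrite addr0; case: (f 0) => c s /=.
rewrite /kappa_eq /kappa_add /= => ns h.
have : p ((- (c * s)) * s).
  by have -> : (- (c * s)) * s = c * (s * s) - (c * s + c * s) * s by ring.
by case/pp => [/(idealN pi)|//]; rewrite opprK; case/pp.
Qed.

Lemma kappa_mono_kernel x : p (f x).1 <-> x = 0.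
Proof.
split=> [px|->]; last exact: kappa_mono_zero.
apply: finj; move: px (fden x) kappa_mono_zero.
case: (f x) (f 0) => a s [c w]; rewrite /kappa_eq /= => pa _ pc.
by apply: (idealD pi); [apply: (idealMr pi) | apply: (idealN pi); apply: (idealMr pi)].
Qed.

Lemma kappa_mono_ann r x : p r -> r *: x = 0.
Proof.
move=> pr; apply/kappa_mono_kernel; move: (fscale r x) (fden (r *: x)) (fden x).
case: (f (r *: x)) (f x) => a s [b t]; rewrite /kappa_eq /kappa_scale /= => h _ nt.
have : p (a * t).
  have -> : a * t = (a * t - r * b * s) + r * (b * s) by ring.
  by apply: (idealD pi) => //; apply: idealMr.
by case/pp.
Qed.

Lemma kappa_mono_inj r : ~ p r -> injective (fun x : M => r *: x).
Proof.
move=> nr x y /= rxy; apply: finj.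
have : kappa_eq p (kappa_scale r (f x)) (kappa_scale r (f y)).
  apply: (kappa_eq_trans pprime (fden (r *: y))) (fscale r y).
  by rewrite -rxy; apply: kappa_eq_sym.
case: (f x) (f y) => a s [b t]; rewrite /kappa_eq /kappa_scale /= => h.
have : p (r * (a * t - b * s)).
  by have -> : r * (a * t - b * s) = r * a * t - r * b * s by ring.
by case/pp.
Qed.

Hypothesis nz : nonzero_mod M.

Lemma kappa_mono_prime : prime_module M.
Proof.
split=> // r; case: (classic (p r)) => pr; [left | right].
  by move=> x; apply: kappa_mono_ann.
exact: kappa_mono_inj.
Qed.

Lemma kappa_mono_Ann : Ann M = p.
Proof.
apply: functional_extensionality => r; apply: propositional_extensionality.
split=> [Ar|pr x]; last exact: kappa_mono_ann.
apply: NNPP => nr; case: nz => x; apply; apply: (kappa_mono_inj nr).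
by rewrite /= (Ar x) scaler0.
Qed.

(* For nonzero u, v with f u = a/s and f v = b/t, the element (b s) u equals
   (a t) v, and it is nonzero since b s is outside p. *)
Lemma kappa_mono_uniform : uniform_module M.
Proof.
split=> // U V [_ _ UZ] [_ _ VZ] [u [Uu nu]] [v [Vv nv]].
have nau : ~ p (f u).1 by move/kappa_mono_kernel.
have nav : ~ p (f v).1 by move/kappa_mono_kernel.
have cross : kappa_eq p (kappa_scale ((f v).1 * (f u).2) (f u))
                        (kappa_scale ((f u).1 * (f v).2) (f v)).
  rewrite /kappa_eq /kappa_scale /=; set z := (X in p X).
  have -> : z = 0 by rewrite /z; ring.
  exact: ideal0.
have E : ((f v).1 * (f u).2) *: u = ((f u).1 * (f v).2) *: v.
  apply: finj; apply: (kappa_eq_trans (v := kappa_scale _ (f u)) pprime (fden u) (fscale _ _)).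
  apply: (kappa_eq_trans (v := kappa_scale _ (f v)) pprime (fden v) cross).
  exact: kappa_eq_sym (fscale _ _).
exists (((f v).1 * (f u).2) *: u); split; [exact: UZ | rewrite E; exact: VZ |].
have nbs : ~ p ((f v).1 * (f u).2) by case/pp; [apply: nav | apply: fden].
by move=> bu0; apply: nu; apply: (kappa_mono_inj nbs); rewrite /= bu0 scaler0.
Qed.

End FromKappa.

End Modules.

Theorem theorem1p5 (R : comUnitRingType) (F : (R -> Prop) -> Prop)
  (M : lmodType R) :
  noetherian R -> local_ring R -> gabriel_topology F ->
  (simple_F_torsion_free M F <->
     [/\ prime_module M, uniform_module M & Fstar F (Ann M)]) /\
  ([/\ prime_module M, uniform_module M & Fstar F (Ann M)] <->
     (exists p : R -> Prop, Fstar F p /\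
        (exists f : M -> R * R, kappa_mono p f) /\ nonzero_mod M)).
Proof.
move=> noe _ gF; split; split.
- move=> sFtf; split;
    [exact: sFtf_prime sFtf | exact: sFtf_uniform gF sFtf | exact: sFtf_Ann_Fstar gF sFtf].
- exact: prime_uniform_sFtf.
- move=> [pm um hA]; have [x0 nx0] := proj1 pm.
  exists (Ann M); split=> //; split; [exact: (kappa_embedding pm um nx0) | exact: proj1 pm].
- move=> [p [hp [[f fmono] nz]]]; have [pprime _ _] := hp.
  split; [exact: kappa_mono_prime pprime fmono nz | exact: kappa_mono_uniform pprime fmono nz |].
  by rewrite (kappa_mono_Ann pprime fmono nz).
Qed.
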